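(* Let $i,j\in\mathbb Z^{\geq 0}$. Then for all $n\in\mathbb N$: (i) $f_{i,j}(n)+1=f_{i,j-1}(n)$; (ii) $f_{i+1,j}(n)+1=f_{i+1,j-1}(n)$; (iii) $f_{i,0}(a(n))+1=f_{i+1,F(i+1)-1}(n)$; (iv) $f_{i,0}(b(n))+1=f_{i,F(i+2)-1}(b(n)+1)$; (v) $f_{i+1,0}(n)+1=f_{i,F(i+2)-1}(a(n)+1)$.
   Context: $\mathbb N=\{1,2,\dots\}$, $\varphi=\frac{1+\sqrt5}{2}$, $a(n)=\lfloor n\varphi\rfloor$, $b(n)=\lfloor n\varphi^2\rfloor$. $F$ is the Fibonacci sequence with $F(0)=0$, $F(1)=F(2)=1$, $F(n)=F(n-1)+F(n-2)$. For $i\in\mathbb Z^{\geq 0}$, $j\in\mathbb Z$, $f_{i,j}(n)=F(i+1)a(n)+F(i)n-j$ for $n\in\mathbb N$. *)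

From Stdlib Require Import Reals ZArith.
Open Scope R_scope.

Definition phi : R := (1 + sqrt 5) / 2.

Definition rfloor (x : R) : Z := Int_part x.

(* a(n) = floor(n phi), b(n) = floor(n phi^2), as naturals (values are >= 0) *)
Definition a (n : nat) : nat := Z.to_nat (rfloor (INR n * phi)).
Definition b (n : nat) : nat := Z.to_nat (rfloor (INR n * phi ^ 2)).

Fixpoint F (n : nat) : nat :=
  match n with
  | O => O
  | S m => match m with
           | O => 1%nat
           | S k => (F m + F k)%nat
           end
  end.

Definition fij (i : nat) (j : Z) (n : nat) : Z :=
  (Z.of_nat (F (i + 1)) * Z.of_nat (a n) + Z.of_nat (F i) * Z.of_nat n - j)%Z.

From Stdlib Require Import Reals ZArith Znumtheory Wf_nat Lra Lia Psatz.
Open Scope R_scope.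

(* Write θ = nφ - a(n), so 0 <= θ < 1, and θ > 0 for n >= 1 because φ is
   irrational.  From φ² = φ + 1 one gets a(n)φ = a(n) + n - θ(φ - 1) and
   b(n) = a(n) + n, hence (a(n) + n)φ = 2a(n) + n + θ(2 - φ).  Since
   1 < φ < 2 this determines a(a(n)), a(a(n)+1), a(b(n)) and a(b(n)+1) as
   linear expressions in a(n) and n; with F(i+2) = F(i+1) + F(i) all five
   identities become ring identities. *)

Lemma prime_5 : prime 5.
Proof.
  apply prime_intro; [lia |].
  intros n Hn; apply Zgcd_1_rel_prime.
  assert (n = 1 \/ n = 2 \/ n = 3 \/ n = 4)%Z as [-> | [-> | [-> | ->]]] by lia;
    reflexivity.
Qed.

Lemma sqr_eq_5_sqr_eq0 (p q : Z) : (p * p = 5 * (q * q))%Z -> q = 0%Z.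
Proof.
  revert p; induction q as [q IH] using (well_founded_ind (well_founded_ltof Z Z.abs_nat)).
  intros p Hpq.
  assert (H5p : (5 | p)%Z).
  { destruct (prime_mult 5 prime_5 p p) as [H | H]; [exists (q * q)%Z; lia | exact H | exact H]. }
  destruct H5p as [r ->].
  assert (Hqr : (q * q = 5 * (r * r))%Z) by lia.
  destruct (Z.eq_dec q 0) as [| Hq]; [assumption |].
  assert (Hr : r = 0%Z) by (apply (IH r) with (p := q); [unfold ltof; nia | exact Hqr]).
  subst r; nia.
Qed.

Lemma sqrt5_sqr : sqrt 5 * sqrt 5 = 5.
Proof. apply sqrt_sqrt; lra. Qed.

Lemma phi_sqr : phi * phi = phi + 1.
Proof. unfold phi; pose proof sqrt5_sqr; nra. Qed.

Lemma phi_bounds : 1 < phi < 2.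
Proof. unfold phi; pose proof sqrt5_sqr; pose proof (sqrt_pos 5); split; nra. Qed.

Lemma INR_mul_phi_neq (n k : nat) : (1 <= n)%nat -> INR n * phi <> INR k.
Proof.
  intros Hn Heq.
  set (p := (2 * Z.of_nat k - Z.of_nat n)%Z).
  assert (Hp : IZR p = INR n * sqrt 5).
  { unfold p; rewrite minus_IZR, mult_IZR, <- !INR_IZR_INZ.
    unfold phi in Heq; simpl; lra. }
  assert (Hsqr : (p * p = 5 * (Z.of_nat n * Z.of_nat n))%Z).
  { apply eq_IZR; rewrite !mult_IZR, Hp, <- INR_IZR_INZ.
    pose proof sqrt5_sqr; simpl; nra. }
  apply sqr_eq_5_sqr_eq0 in Hsqr; lia.
Qed.

Lemma Z_to_nat_rfloor_bounds (x : R) :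
  0 <= x -> INR (Z.to_nat (rfloor x)) <= x < INR (Z.to_nat (rfloor x)) + 1.
Proof.
  intros Hx; unfold rfloor.
  destruct (base_Int_part x) as [Hle Hgt].
  assert (Hpos : (-1 < Int_part x)%Z) by (apply lt_IZR; simpl; lra).
  rewrite INR_IZR_INZ, Z2Nat.id by lia; lra.
Qed.

Lemma Z_to_nat_rfloor_eq (x : R) (k : nat) :
  INR k <= x < INR k + 1 -> Z.to_nat (rfloor x) = k.
Proof.
  intros Hk; unfold rfloor.
  rewrite <- (Int_part_spec x (Z.of_nat k)), Nat2Z.id; [reflexivity |].
  rewrite <- INR_IZR_INZ; lra.
Qed.

Lemma a_bounds (n : nat) : INR (a n) <= INR n * phi < INR (a n) + 1.
Proof.
  apply Z_to_nat_rfloor_bounds.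
  pose proof (pos_INR n); pose proof phi_bounds; nra.
Qed.

Lemma a_eq (n k : nat) : INR k <= INR n * phi < INR k + 1 -> a n = k.
Proof. apply Z_to_nat_rfloor_eq. Qed.

Lemma a_lt_mul_phi (n : nat) : (1 <= n)%nat -> INR (a n) < INR n * phi.
Proof.
  intros Hn; destruct (a_bounds n) as [[Hlt | Heq] _]; [exact Hlt |].
  exfalso; exact (INR_mul_phi_neq n (a n) Hn (eq_sym Heq)).
Qed.

Lemma a_mul_phi (n : nat) :
  INR (a n) * phi = INR (a n) + INR n - (INR n * phi - INR (a n)) * (phi - 1).
Proof.
  transitivity (INR (a n) * phi + INR n * (phi + 1 - phi * phi)); [rewrite phi_sqr |]; ring.
Qed.

Lemma a_a (n : nat) : (1 <= n)%nat -> (a (a n) + 1 = a n + n)%nat.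
Proof.
  intros Hn; destruct n as [| m]; [lia |].
  rewrite (a_eq (a (S m)) (a (S m) + m)); [lia |].
  pose proof (a_mul_phi (S m)); pose proof (a_bounds (S m));
    pose proof (a_lt_mul_phi (S m) Hn); pose proof phi_bounds.
  rewrite plus_INR, S_INR in *; split; nra.
Qed.

Lemma a_succ_a (n : nat) : a (a n + 1) = (a n + n + 1)%nat.
Proof.
  apply a_eq.
  pose proof (a_mul_phi n); pose proof (a_bounds n); pose proof phi_bounds.
  rewrite !plus_INR; simpl; split; nra.
Qed.

Lemma b_eq (n : nat) : b n = (a n + n)%nat.
Proof.
  apply Z_to_nat_rfloor_eq.
  replace (phi ^ 2) with (phi + 1) by (rewrite <- phi_sqr; ring).
  pose proof (a_bounds n); rewrite plus_INR; lra.
Qed.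

Lemma a_b (n : nat) : a (b n) = (a n + b n)%nat.
Proof.
  rewrite b_eq; apply a_eq.
  pose proof (a_mul_phi n); pose proof (a_bounds n); pose proof phi_bounds.
  rewrite !plus_INR; split; nra.
Qed.

Lemma a_succ_b (n : nat) : a (b n + 1) = (a n + b n + 1)%nat.
Proof.
  rewrite b_eq; apply a_eq.
  pose proof (a_mul_phi n); pose proof (a_bounds n); pose proof phi_bounds.
  rewrite !plus_INR; simpl; split; nra.
Qed.

Lemma F_add2 (i : nat) : F (i + 2) = (F (i + 1) + F i)%nat.
Proof. rewrite !Nat.add_succ_r, Nat.add_0_r; reflexivity. Qed.

Theorem proposition3p5 (i : nat) (j : nat) :
  forall n : nat, (1 <= n)%nat ->
    (fij i (Z.of_nat j) n + 1 = fij i (Z.of_nat j - 1) n)%Z /\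
    (fij (i + 1) (Z.of_nat j) n + 1 = fij (i + 1) (Z.of_nat j - 1) n)%Z /\
    (fij i 0 (a n) + 1 = fij (i + 1) (Z.of_nat (F (i + 1)) - 1) n)%Z /\
    (fij i 0 (b n) + 1 = fij i (Z.of_nat (F (i + 2)) - 1) (b n + 1))%Z /\
    (fij (i + 1) 0 n + 1 = fij i (Z.of_nat (F (i + 2)) - 1) (a n + 1))%Z.
Proof.
  intros n Hn; unfold fij.
  assert (Haa : Z.of_nat (a (a n)) = (Z.of_nat (a n) + Z.of_nat n - 1)%Z)
    by (pose proof (a_a n Hn); lia).
  rewrite <- Nat.add_assoc; simpl (1 + 1)%nat.
  rewrite Haa, a_succ_a, a_b, a_succ_b, F_add2, !Nat2Z.inj_add.
  repeat split; ring.
Qed.
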